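(* Let $V,W$ be real inner product spaces of dimension $2$ and $3$ respectively. For $\epsilon\ge0$ and $L\in\mathrm{Hom}(V,W)$ set $q_\epsilon(L)=\operatorname{tr}\sqrt{\epsilon^2\mathbb 1+L^*L}$. Then: (a) $q_\epsilon(L)=\sqrt{\operatorname{tr}(\epsilon^2\mathbb 1+L^*L)+2\sqrt{\det(\epsilon^2\mathbb 1+L^*L)}}$ for all $L$; consequently $q_\epsilon$ is smooth for $\epsilon>0$. (b) $q_\epsilon$ is convex for every $\epsilon\ge0$. (c) Let $L\in\mathrm{Hom}(V,W)$, let $A:W\to W$ be nonnegative self-adjoint and let $\epsilon\ge0$, assuming moreover that $L$ has rank $2$ if $\epsilon=0$. Then $\frac{d}{dt}q_\epsilon((\mathbb 1+tA)L)\big|_{t=0}\ge0$, with strict inequality if $A\circ L\neq0$.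
   Context: $L^*$ denotes the adjoint of $L$; $\mathbb 1$ is the identity of $V$. *)

From HB Require Import structures.
From mathcomp Require Import all_boot all_order all_algebra.
From mathcomp Require Import all_classical all_reals all_analysis.
Set Implicit Arguments. Unset Strict Implicit. Unset Printing Implicit Defensive.
Import Order.TTheory GRing.Theory Num.Theory.
Import numFieldNormedType.Exports.
Local Open Scope classical_set_scope.
Local Open Scope ring_scope.

(* V = R^2, W = R^3 with their standard inner products; L : Hom(V,W) is the
   3x2 matrix acting on column vectors, L^* = L^T. *)

Definition psdmx {R : realType} {n : nat} (M : 'M[R]_n) : Prop :=
  M^T = M /\ forall v : 'cV[R]_n, 0 <= (v^T *m M *m v) 0 0.

(* the (unique) nonnegative self-adjoint square root of M, when it exists *)
Definition sqrtmx {R : realType} {n : nat} (M : 'M[R]_n) : 'M[R]_n :=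
  xget 0 [set S : 'M[R]_n | psdmx S /\ S *m S = M].

Definition q_eps {R : realType} (eps : R) (L : 'M[R]_(3, 2)) : R :=
  \tr (sqrtmx (eps ^+ 2 *: 1%:M + L^T *m L)).

Fixpoint iter_dderiv {R : realType} {m n : nat} (vs : seq 'M[R]_(m, n))
  (f : 'M[R]_(m, n) -> R) : 'M[R]_(m, n) -> R :=
  match vs with
  | [::] => f
  | v :: vs' => fun x => 'D_v (iter_dderiv vs' f) x
  end.

Definition smooth {R : realType} {m n : nat} (f : 'M[R]_(m, n) -> R) : Prop :=
  forall vs : seq 'M[R]_(m, n),
    continuous (iter_dderiv vs f) /\
    forall (v x : 'M[R]_(m, n)), derivable (iter_dderiv vs f) x v.

Definition convex_fun {R : realType} {m n : nat} (f : 'M[R]_(m, n) -> R) : Prop :=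
  forall (x y : 'M[R]_(m, n)) (t : R), 0 <= t <= 1 ->
    f ((1 - t) *: x + t *: y) <= (1 - t) * f x + t * f y.

(* For a positive semidefinite 2x2 matrix M with positive semidefinite square root S,
   Cayley-Hamilton gives (tr S)^2 = tr M + 2 det S and det S = sqrt (det M); this is (a).
   For eps > 0 the determinant of eps^2 + L^T L is positive, so q_eps is obtained from the
   polynomial entries of L by sums, products and square roots of positive functions, and such
   functions have directional derivatives of the same kind, hence are smooth.

   Convexity comes from the dual description
     q_eps L = max { tr (U^T L) + eps tr V : U^T U + V^T V <= 1 },
   a supremum of linear functions of L.  The bound holds because tr C <= tr sqrt (C^T C) and
   because M |-> tr sqrt M is monotone for the Loewner order (the determinant is superadditive
   on positive semidefinite 2x2 matrices); for eps > 0 the maximum is attained at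
   U = L S^-1, V = eps S^-1 with S = sqrt (eps^2 + L^T L).  Finally
   q_0 <= q_eps <= q_0 + 2 eps, so q_0 is a uniform limit of convex functions.

   For (c), the Gram matrix of (1 + tA) L is G + 2t K + O(t^2) with K = L^T A L >= 0, and the
   chain rule gives the derivative (2 tr K + m / sqrt (det G)) / (2 q_eps L), where
   m = det (G + 2K) - det G - det (2K) >= 0; it is at least tr K / q_eps L, which is positive
   unless A L = 0. *)

From HB Require Import structures.
From mathcomp Require Import all_boot all_order all_algebra.
From mathcomp Require Import all_classical all_reals all_analysis.
From mathcomp Require Import ring lra.
Import Order.TTheory GRing.Theory Num.Theory.
Import numFieldNormedType.Exports.
Set Implicit Arguments.
Unset Strict Implicit.
Unset Printing Implicit Defensive.

Local Open Scope ring_scope.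

Lemma ord2_0 : (0 : 'I_2) = ord0. Proof. exact/val_inj. Qed.
Lemma ord2_1 : (1 : 'I_2) = lift ord0 ord0. Proof. exact/val_inj. Qed.

Lemma ord2P (i : 'I_2) : i = 0 \/ i = 1.
Proof. by case: i => [[|[|//]] ?]; [left|right]; apply/val_inj. Qed.

Section Matrix2.
Context {R : comPzRingType}.
Implicit Types (M N S : 'M[R]_2).

Lemma mx2P M N : M 0 0 = N 0 0 -> M 0 1 = N 0 1 -> M 1 0 = N 1 0 ->
  M 1 1 = N 1 1 -> M = N.
Proof.
move=> e00 e01 e10 e11; apply/matrixP => i j.
by case: (ord2P i) => ->; case: (ord2P j) => ->.
Qed.

Lemma mulmx2E m p (A : 'M[R]_(m, 2)) (B : 'M[R]_(2, p)) i j :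
  (A *m B) i j = A i 0 * B 0 j + A i 1 * B 1 j.
Proof. by rewrite mxE !big_ord_recl big_ord0 addr0 ord2_0 ord2_1. Qed.

Lemma mxtrace2E M : \tr M = M 0 0 + M 1 1.
Proof. by rewrite /mxtrace !big_ord_recl big_ord0 addr0 ord2_0 ord2_1. Qed.

Lemma det2E M : \det M = M 0 0 * M 1 1 - M 0 1 * M 1 0.
Proof.
rewrite (expand_det_row _ 0) !big_ord_recl big_ord0 addr0 /cofactor.
rewrite !det_mx11 /= !mxE /= ord2_0 ord2_1.
have -> : lift ord0 (0 : 'I_1) = lift ord0 ord0 :> 'I_2 by apply/val_inj.
have -> : lift (lift ord0 ord0) (0 : 'I_1) = ord0 :> 'I_2 by apply/val_inj.
rewrite /bump /=; ring.
Qed.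

Lemma qform2E M (v : 'cV[R]_2) :
  (v^T *m M *m v) 0 0 = M 0 0 * v 0 0 ^+ 2 + (M 0 1 + M 1 0) * v 0 0 * v 1 0
    + M 1 1 * v 1 0 ^+ 2.
Proof. rewrite (@mulmx2E 1 1) !(@mulmx2E 1 2) !mxE; ring. Qed.

Lemma sqr_mxtrace2 S : \tr S ^+ 2 = \tr (S *m S) + 2 * \det S.
Proof. rewrite !mxtrace2E det2E !mulmx2E; ring. Qed.

Lemma det2_scalar_add (a : R) M :
  \det (a *: 1%:M + M) = a ^+ 2 + a * \tr M + \det M.
Proof. rewrite !det2E mxtrace2E !mxE /=; ring. Qed.

Lemma det2_add M N :
  \det (M + N) = \det M + \det N + (M 0 0 * N 1 1 + N 0 0 * M 1 1
    - M 0 1 * N 1 0 - N 0 1 * M 1 0).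
Proof. rewrite !det2E !mxE; ring. Qed.

Lemma cayley_hamilton2 M :
  M *m M = \tr M *: M - \det M *: 1%:M.
Proof. by apply: mx2P; rewrite !mulmx2E mxtrace2E det2E !mxE /=; ring. Qed.

End Matrix2.


Section Dot.
Context {R : realFieldType} {n : nat}.
Implicit Types (u v w : 'cV[R]_n).

Definition dot u v : R := (u^T *m v) 0 0.

Lemma dotE u v : dot u v = \sum_i u i 0 * v i 0.
Proof. by rewrite /dot mxE; apply: eq_bigr => i _; rewrite mxE. Qed.

Lemma dotC u v : dot u v = dot v u.
Proof. by rewrite !dotE; apply: eq_bigr => i _; rewrite mulrC. Qed.

Lemma dotDr u v w : dot u (v + w) = dot u v + dot u w.
Proof. by rewrite /dot mulmxDr mxE. Qed.

Lemma dotDl u v w : dot (v + w) u = dot v u + dot w u.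
Proof. by rewrite dotC dotDr !(dotC u). Qed.

Lemma dotZr u v a : dot u (a *: v) = a * dot u v.
Proof. by rewrite /dot -scalemxAr mxE. Qed.

Lemma dotZl u v a : dot (a *: v) u = a * dot v u.
Proof. by rewrite dotC dotZr dotC. Qed.

Lemma dotBr u v w : dot u (v - w) = dot u v - dot u w.
Proof. by rewrite dotDr -scaleN1r dotZr mulN1r. Qed.

Lemma dotBl u v w : dot (v - w) u = dot v u - dot w u.
Proof. by rewrite dotC dotBr !(dotC u). Qed.

Lemma dot_ge0 u : 0 <= dot u u.
Proof. by rewrite dotE; apply: sumr_ge0 => i _; rewrite -expr2 sqr_ge0. Qed.

Lemma dot_eq0 u : dot u u = 0 -> u = 0.
Proof.
rewrite dotE => /eqP; rewrite psumr_eq0 => [/allP uu0|i _]; last by rewrite -expr2 sqr_ge0.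
apply/matrixP => i j; rewrite (ord1 j) mxE.
by have := uu0 i (mem_index_enum i); rewrite /= mulf_eq0 orbb => /eqP.
Qed.

Lemma qform_dot (A : 'M[R]_n) v : (v^T *m A *m v) 0 0 = dot v (A *m v).
Proof. by rewrite /dot mulmxA. Qed.

End Dot.

Lemma dot_mul {R : realFieldType} m n (u : 'cV[R]_m) (A : 'M[R]_(m, n)) v :
  dot u (A *m v) = dot (A^T *m u) v.
Proof. by rewrite /dot trmx_mul trmxK mulmxA. Qed.

Section Psd.
Context {R : realType}.

Lemma psdmxP n (A : 'M[R]_n) : psdmx A <-> A^T = A /\ forall v, 0 <= dot v (A *m v).
Proof. by split => -[? qA]; split => // v; [rewrite -qform_dot | rewrite qform_dot]. Qed.

Lemma psdmxD n (A B : 'M[R]_n) : psdmx A -> psdmx B -> psdmx (A + B).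
Proof.
move=> /psdmxP[At qA] /psdmxP[Bt qB]; apply/psdmxP; split; first by rewrite linearD /= At Bt.
by move=> v; rewrite mulmxDl dotDr addr_ge0.
Qed.

Lemma psdmxZ n a (A : 'M[R]_n) : 0 <= a -> psdmx A -> psdmx (a *: A).
Proof.
move=> a0 /psdmxP[At qA]; apply/psdmxP; split; first by rewrite linearZ /= At.
by move=> v; rewrite -scalemxAl dotZr mulr_ge0.
Qed.

Lemma psdmx1 n : psdmx (1%:M : 'M[R]_n).
Proof. by apply/psdmxP; split=> [|v]; rewrite ?trmx1 ?mul1mx ?dot_ge0. Qed.

Lemma psdmx_conj m n (A : 'M[R]_m) (L : 'M[R]_(m, n)) :
  psdmx A -> psdmx (L^T *m A *m L).
Proof.
move=> /psdmxP[At qA]; apply/psdmxP; split; first by rewrite !trmx_mul trmxK At mulmxA.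
by move=> v; rewrite -!mulmxA dot_mul trmxK.
Qed.

Lemma psdmx_gram m n (L : 'M[R]_(m, n)) : psdmx (L^T *m L).
Proof. by rewrite -[L^T]mulmx1; apply/psdmx_conj/psdmx1. Qed.

Lemma psdmx_ker n (A : 'M[R]_n) v : psdmx A -> dot v (A *m v) = 0 -> A *m v = 0.
Proof.
move=> /psdmxP[At qA] Av0; apply: dot_eq0.
set w := A *m v; set a := dot w (A *m w); set b := dot w w.
have qvw s : 0 <= 2 * s * b + s ^+ 2 * a.
  have := qA (v + s *: w); rewrite mulmxDr -scalemxAr !dotDl !dotDr !dotZl !dotZr Av0.
  have -> : dot v (A *m w) = dot w (A *m v) by rewrite dot_mul At dotC.
  by rewrite -/w -/a -/b; lra.
have b0 := dot_ge0 w; have a0 : 0 <= a := qA w.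
have [a_eq0|a_neq0] := eqVneq a 0; first by have := qvw (- b); rewrite a_eq0; nra.
have a_gt0 : 0 < a by rewrite lt_def a_neq0.
have := qvw (- b / a).
have -> : 2 * (- b / a) * b + (- b / a) ^+ 2 * a = - (b * b) / a by field.
rewrite mulNr oppr_ge0 pmulr_lle0 ?invr_gt0 //; nra.
Qed.

Lemma unitmx_gram m n (L : 'M[R]_(m, n)) : \rank L = n -> L^T *m L \in unitmx.
Proof.
move=> rkL; rewrite -row_free_unit -kermx_eq0; apply/rowV0P => v /sub_kermxP vLL0.
set u := L *m v^T.
have u0 : u = 0.
  apply: dot_eq0; rewrite /dot /u trmx_mul trmxK mulmxA -(mulmxA v) vLL0.
  by rewrite mul0mx mxE.
apply/eqP; rewrite -(mulmx_free_eq0 _ (_ : row_free L^T)); last first.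
  by rewrite /row_free mxrank_tr rkL.
by rewrite -[v]trmxK -trmx_mul -/u u0 trmx0.
Qed.

Lemma mxtrace_conj_gt0 m n (A : 'M[R]_m) (L : 'M[R]_(m, n)) :
  psdmx A -> A *m L != 0 -> 0 < \tr (L^T *m A *m L).
Proof.
move=> psdA ALn0; have /psdmxP[_ qA] := psdA.
have diag j : (L^T *m A *m L) j j = dot (col j L) (A *m col j L).
  rewrite /dot mulmxA tr_col !mxE; apply: eq_bigr => k _; rewrite !mxE.
  by congr (_ * _); apply: eq_bigr => l _; rewrite !mxE.
have diag_ge0 j : 0 <= (L^T *m A *m L) j j by rewrite diag.
rewrite lt_def sumr_ge0 // andbT; apply: contra ALn0.
rewrite psumr_eq0 // => /allP diag0; apply/eqP/matrixP => i j.
have -> : (A *m L) i j = col j (A *m L) i 0 by rewrite [RHS]mxE.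
rewrite colE -mulmxA -colE (psdmx_ker psdA) ?mxE // -diag.
by apply/eqP/diag0/mem_index_enum.
Qed.

End Psd.

Section Psd2.
Context {R : realType}.
Implicit Types (M X Y : 'M[R]_2).

Lemma psdmx2_entries M : psdmx M ->
  [/\ M 0 1 = M 1 0, 0 <= M 0 0, 0 <= M 1 1 & M 0 1 ^+ 2 <= M 0 0 * M 1 1].
Proof.
move=> [Mt qM]; have M10 : M 0 1 = M 1 0 by rewrite -[in RHS]Mt mxE.
have {}qM x y : 0 <= M 0 0 * x ^+ 2 + 2 * M 0 1 * x * y + M 1 1 * y ^+ 2.
  have := qM (\col_i (if i == 0 :> nat then x else y)).
  by rewrite qform2E !mxE /= -M10; lra.
have a0 : 0 <= M 0 0 by have := qM 1 0; rewrite expr1n expr0n /=; lra.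
have d0 : 0 <= M 1 1 by have := qM 0 1; rewrite expr1n expr0n /=; lra.
split=> //; have [a_eq0|a_neq0] := eqVneq (M 0 0) 0.
  by have := qM (- (M 1 1 + 1)) (M 0 1); rewrite a_eq0; nra.
have a_gt0 : 0 < M 0 0 by rewrite lt_def a_neq0.
by have := qM (- M 0 1) (M 0 0); nra.
Qed.

Lemma psdmx2_tr_ge0 M : psdmx M -> 0 <= \tr M.
Proof. by case/psdmx2_entries => *; rewrite mxtrace2E addr_ge0. Qed.

Lemma psdmx2_det_ge0 M : psdmx M -> 0 <= \det M.
Proof. by case/psdmx2_entries => M10 *; rewrite det2E -M10 subr_ge0 -expr2. Qed.

Lemma psdmx2_eq0 M : psdmx M -> \tr M = 0 -> M = 0.
Proof.
case/psdmx2_entries => M10 a0 d0 b2; rewrite mxtrace2E => tr0.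
have a_eq0 : M 0 0 = 0 by lra.
have d_eq0 : M 1 1 = 0 by lra.
have b_eq0 : M 0 1 = 0 by move: b2; rewrite a_eq0 mul0r; nra.
by apply: mx2P; rewrite ?mxE // -?M10.
Qed.

Lemma det2_psd_superadd X Y : psdmx X -> psdmx Y -> \det X + \det Y <= \det (X + Y).
Proof.
case/psdmx2_entries => X10 a0 d0 b2; case/psdmx2_entries => Y10 a0' d0' b2'.
rewrite det2_add -X10 -Y10 lerDl.
set a := X 0 0 in a0 b2 *; set b := X 0 1 in b2 *; set d := X 1 1 in d0 b2 *.
set a' := Y 0 0 in a0' b2' *; set b' := Y 0 1 in b2' *; set d' := Y 1 1 in d0' b2' *.
have amgm : 4 * (a * d * (a' * d')) <= (a * d' + a' * d) ^+ 2.
  by have := sqr_ge0 (a * d' - a' * d); nra.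
have bb' : (b * b') ^+ 2 <= a * d * (a' * d') by rewrite exprMn ler_pM ?sqr_ge0.
have : (2 * (b * b')) ^+ 2 <= (a * d' + a' * d) ^+ 2 by rewrite exprMn; lra.
have : 0 <= a * d' + a' * d by rewrite addr_ge0 ?mulr_ge0.
by nra.
Qed.

End Psd2.

Section Sqrt2.
Context {R : realType}.
Implicit Types (M S X Y C : 'M[R]_2).

Definition trsqrt M : R := Num.sqrt (\tr M + 2 * Num.sqrt (\det M)).

Lemma trsqrt_ge0 M : 0 <= trsqrt M.
Proof. exact: sqrtr_ge0. Qed.

Lemma trsqrt_gt0 M : psdmx M -> 0 < \det M -> 0 < trsqrt M.
Proof.
move=> psdM detM; rewrite sqrtr_gt0 ltr_wpDl ?psdmx2_tr_ge0 //.
by rewrite mulr_gt0 ?sqrtr_gt0.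
Qed.

Lemma mxtrace_psd_sqrt S M : psdmx S -> S *m S = M -> \tr S = trsqrt M.
Proof.
move=> psdS <-; have tr0 := psdmx2_tr_ge0 psdS; have det0 := psdmx2_det_ge0 psdS.
rewrite /trsqrt det_mulmx -expr2 sqrtr_sqr ger0_norm // -sqr_mxtrace2.
by rewrite sqrtr_sqr ger0_norm.
Qed.

Lemma psdmx2_sqrt M : psdmx M -> exists2 S, psdmx S & S *m S = M.
Proof.
move=> psdM; set d := Num.sqrt (\det M); set t := trsqrt M.
have d0 : 0 <= d := sqrtr_ge0 _.
have d2 : d ^+ 2 = \det M by rewrite sqr_sqrtr // psdmx2_det_ge0.
have t2 : t ^+ 2 = \tr M + 2 * d.
  by rewrite sqr_sqrtr // addr_ge0 ?mulr_ge0 ?psdmx2_tr_ge0.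
(* By Cayley-Hamilton, (M + d)^2 = (tr M + 2 d) M = t^2 M. *)
exists (t^-1 *: (M + d *: 1%:M)).
  by apply/psdmxZ/psdmxD/psdmxZ/psdmx1; rewrite ?invr_ge0 ?trsqrt_ge0.
have [t_eq0|t_neq0] := eqVneq t 0.
  have trM0 : \tr M = 0.
    by move: t2; rewrite t_eq0 expr0n /=; have := psdmx2_tr_ge0 psdM; lra.
  by rewrite t_eq0 invr0 !scale0r mul0mx (psdmx2_eq0 psdM trM0).
have NN : (M + d *: 1%:M) *m (M + d *: 1%:M) = t ^+ 2 *: M.
  rewrite mulmxDl !mulmxDr (cayley_hamilton2 M) -scalemxAl -scalemxAr -scalemxAl.
  rewrite mul1mx mulmx1 mul1mx t2 scalerA -expr2 d2 scalerDl.
  by apply/matrixP => i j; rewrite !mxE; ring.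
by rewrite -scalemxAl -scalemxAr NN !scalerA -invfM -expr2 mulVf ?expf_neq0 // scale1r.
Qed.

Lemma sqrtmxP M : psdmx M -> psdmx (sqrtmx M) /\ sqrtmx M *m sqrtmx M = M.
Proof.
case/psdmx2_sqrt => S psdS SS.
by have [] := xgetPex 0 (ex_intro (fun S => psdmx S /\ S *m S = M) S (conj psdS SS)).
Qed.

Lemma mxtrace_sqrtmx M : psdmx M -> \tr (sqrtmx M) = trsqrt M.
Proof. by case/sqrtmxP; apply: mxtrace_psd_sqrt. Qed.

Lemma ler_trsqrt X Y : psdmx X -> psdmx (Y - X) -> trsqrt X <= trsqrt Y.
Proof.
move=> psdX psdZ; have -> : Y = X + (Y - X) by rewrite addrC subrK.
move: (Y - X) psdZ => Z psdZ.
have trX := psdmx2_tr_ge0 psdX; have trZ := psdmx2_tr_ge0 psdZ.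
have detX := psdmx2_det_ge0 psdX; have detZ := psdmx2_det_ge0 psdZ.
have detXZ := det2_psd_superadd psdX psdZ.
have sqrt_det : Num.sqrt (\det X) <= Num.sqrt (\det (X + Z)) by rewrite ler_sqrt; lra.
by rewrite /trsqrt mxtraceD ler_sqrt ?addr_ge0 ?mulr_ge0 ?sqrtr_ge0 //; lra.
Qed.

Lemma mxtrace_le_trsqrt C : \tr C <= trsqrt (C^T *m C).
Proof.
rewrite /trsqrt !mxtrace2E det2E !mulmx2E !mxE.
set p := C 0 0; set q := C 0 1; set r := C 1 0; set s := C 1 1.
have -> : (p * p + r * r) * (q * q + s * s) - (p * q + r * s) * (q * p + s * r)
  = (p * s - q * r) ^+ 2 by ring.
rewrite sqrtr_sqr; apply: le_trans (ler_norm _) _; rewrite -[`|p + s|]sqrtr_sqr.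
by apply: ler_wsqrtr; have := ler_norm (p * s - q * r); have := sqr_ge0 (q - r); nra.
Qed.

End Sqrt2.

Section Gram.
Context {R : realType} {m n : nat}.
Implicit Types (eps : R) (L U : 'M[R]_(m, n)).

Definition gram_eps eps L : 'M[R]_n := eps ^+ 2 *: 1%:M + L^T *m L.

Lemma psdmx_gram_eps eps L : psdmx (gram_eps eps L).
Proof. exact/psdmxD/psdmx_gram/psdmxZ/psdmx1/sqr_ge0. Qed.

Lemma gram_eps_dot eps L v :
  dot v (gram_eps eps L *m v) = eps ^+ 2 * dot v v + dot (L *m v) (L *m v).
Proof. by rewrite mulmxDl dotDr -scalemxAl mul1mx dotZr -mulmxA dot_mul trmxK. Qed.

Lemma dot_sub_mul k (a : 'cV[R]_k) (U : 'M[R]_(k, n)) c :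
  dot (a - U *m c) (a - U *m c) = dot a a - 2 * dot (U^T *m a) c + dot (U *m c) (U *m c).
Proof. by rewrite dotBl !dotBr (dotC (U *m c) a) dot_mul; ring. Qed.

Lemma psdmx_gram_eps_sub eps L U (V : 'M[R]_n) :
  psdmx (1%:M - (U^T *m U + V^T *m V)) ->
  psdmx (gram_eps eps L - (U^T *m L + eps *: V^T)^T *m (U^T *m L + eps *: V^T)).
Proof.
set C := U^T *m L + eps *: V^T; move=> /psdmxP[_ qUV]; apply/psdmxP; split.
  by rewrite linearB /= trmx_mul trmxK; case: (psdmx_gram_eps eps L) => ->.
move=> v; rewrite mulmxBl dotBr gram_eps_dot -mulmxA [dot v (C^T *m _)]dot_mul trmxK.
(* Expand |a - U c|^2 + |b - V c|^2 >= 0, where c = C v = U^T a + V^T b. *)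
set a := L *m v; set b := eps *: v; set c := C *m v.
have c_def : c = U^T *m a + V^T *m b.
  by rewrite /c /C mulmxDl -mulmxA /b -scalemxAl scalemxAr.
have := qUV c; rewrite mulmxBl mul1mx dotBr mulmxDl dotDr -!mulmxA.
rewrite [dot c (U^T *m _)]dot_mul [dot c (V^T *m _)]dot_mul !trmxK.
have := dot_ge0 (a - U *m c); have := dot_ge0 (b - V *m c); rewrite !dot_sub_mul.
have : dot (U^T *m a) c + dot (V^T *m b) c = dot c c by rewrite -dotDl -c_def.
have : dot b b = eps ^+ 2 * dot v v by rewrite /b dotZl dotZr mulrA expr2.
lra.
Qed.

End Gram.

Section GramDet.
Context {R : realType} {m : nat}.
Implicit Types (eps : R) (L : 'M[R]_(m, 2)).

Lemma det_gram_eps eps L :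
  \det (gram_eps eps L) = eps ^+ 4 + eps ^+ 2 * \tr (L^T *m L) + \det (L^T *m L).
Proof. by rewrite det2_scalar_add -exprM. Qed.

Lemma det_gram_eps_gt0 eps L : 0 < eps \/ \rank L = 2 -> 0 < \det (gram_eps eps L).
Proof.
move=> eps_rk; rewrite det_gram_eps.
have trP := psdmx2_tr_ge0 (psdmx_gram L); have detP := psdmx2_det_ge0 (psdmx_gram L).
have := mulr_ge0 (sqr_ge0 eps) trP; have := @exprn_even_ge0 _ 4 eps isT.
case: eps_rk => [eps_gt0|rkL]; first by have := exprn_gt0 4 eps_gt0; lra.
have : 0 < \det (L^T *m L) by rewrite lt_def detP andbT -unitfE -unitmxE unitmx_gram.
lra.
Qed.

Lemma q_epsE eps : q_eps eps = fun L : 'M[R]_(3, 2) => trsqrt (gram_eps eps L).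
Proof. by apply/funext => L; exact/mxtrace_sqrtmx/psdmx_gram_eps. Qed.

End GramDet.

Lemma convex_fun_approx {R : realType} m n (f : 'M[R]_(m, n) -> R) :
  (forall e, 0 < e -> exists2 g, convex_fun g & forall x, f x <= g x <= f x + e) ->
  convex_fun f.
Proof.
move=> approx x y t t01; apply/ler_addgt0Pr => e /approx[g convg fg].
have /andP[t0 t1] := t01; have t0' : 0 <= 1 - t by lra.
have /andP[fgz _] := fg ((1 - t) *: x + t *: y).
have /andP[_ gx] := fg x; have /andP[_ gy] := fg y.
have := convg x y t t01; have := ler_wpM2l t0' gx; have := ler_wpM2l t0 gy.
by nra.
Qed.

Section Convexity.
Context {R : realType} {m : nat}.
Implicit Types (eps : R) (L U : 'M[R]_(m, 2)) (V : 'M[R]_2).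

Lemma mxtrace_dual_le eps L U V : psdmx (1%:M - (U^T *m U + V^T *m V)) ->
  \tr (U^T *m L) + eps * \tr V <= trsqrt (gram_eps eps L).
Proof.
move=> psdUV; have -> : \tr (U^T *m L) + eps * \tr V = \tr (U^T *m L + eps *: V^T).
  by rewrite mxtraceD mxtraceZ mxtrace_tr.
apply: le_trans (mxtrace_le_trsqrt _) _.
by apply: ler_trsqrt; [exact: psdmx_gram | exact: psdmx_gram_eps_sub].
Qed.

Lemma mxtrace_dual_attained eps L : 0 < eps ->
  exists U, exists V, psdmx (1%:M - (U^T *m U + V^T *m V)) /\
    \tr (U^T *m L) + eps * \tr V = trsqrt (gram_eps eps L).
Proof.
move=> eps_gt0; have [psdS SS] := sqrtmxP (psdmx_gram_eps eps L).
move: (sqrtmx _) psdS SS => S psdS SS; set G := gram_eps eps L in SS *.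
have S_unit : S \in unitmx.
  rewrite unitmxE unitfE -sqrf_eq0 expr2 -det_mulmx SS.
  by rewrite gt_eqF // det_gram_eps_gt0 //; left.
set Si := invmx S.
have Si_sym : Si^T = Si by rewrite /Si trmx_inv; case: psdS => ->.
have SiG : Si *m G = S by rewrite -SS mulmxA mulVmx ?mul1mx.
exists (L *m Si), (eps *: Si); split.
  have -> : (L *m Si)^T *m (L *m Si) + (eps *: Si)^T *m (eps *: Si) = Si *m G *m Si.
    rewrite !trmx_mul [(eps *: Si)^T]linearZ /= Si_sym -scalemxAl -scalemxAr.
    rewrite scalerA -expr2 mulmxA.
    by rewrite /G mulmxDr mulmxDl -scalemxAr mulmx1 -scalemxAl !mulmxA addrC.
  by rewrite SiG mulmxV // subrr -(scale0r 1%:M); apply/psdmxZ/psdmx1.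
rewrite -(mxtrace_psd_sqrt psdS SS) -SiG mulmxDr mxtraceD -scalemxAr mulmx1 mxtraceZ.
by rewrite trmx_mul Si_sym mxtraceZ mulrA -expr2 addrC mulmxA.
Qed.

Lemma convex_trsqrt_gram_eps eps : 0 < eps -> convex_fun (fun L => trsqrt (gram_eps eps L)).
Proof.
move=> eps_gt0 x y t /andP[t0 t1].
have [U [V [psdUV <-]]] := mxtrace_dual_attained ((1 - t) *: x + t *: y) eps_gt0.
have t0' : 0 <= 1 - t by lra.
have := ler_wpM2l t0' (mxtrace_dual_le eps x psdUV).
have := ler_wpM2l t0 (mxtrace_dual_le eps y psdUV).
rewrite mulmxDr -!scalemxAr mxtraceD !mxtraceZ; lra.
Qed.

Lemma trsqrt_gram_eps_ge eps L : trsqrt (gram_eps 0 L) <= trsqrt (gram_eps eps L).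
Proof.
apply: ler_trsqrt; first exact: psdmx_gram_eps.
by rewrite /gram_eps expr0n scale0r add0r addrK; exact/psdmxZ/psdmx1/sqr_ge0.
Qed.

Lemma trsqrt_gram_eps_le eps L : 0 <= eps ->
  trsqrt (gram_eps eps L) <= trsqrt (gram_eps 0 L) + 2 * eps.
Proof.
move=> eps_ge0; have [psdS SS] := sqrtmxP (psdmx_gram L).
set S := sqrtmx _ in psdS SS; set T := S + eps *: 1%:M.
have psdT : psdmx T by exact/psdmxD/psdmxZ/psdmx1.
have -> : trsqrt (gram_eps 0 L) + 2 * eps = trsqrt (T *m T).
  rewrite -(mxtrace_psd_sqrt psdT erefl) /T mxtraceD mxtraceZ mxtrace1.
  rewrite /gram_eps expr0n scale0r add0r -(mxtrace_psd_sqrt psdS SS); ring.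
apply: ler_trsqrt; first exact: psdmx_gram_eps.
have -> : T *m T - gram_eps eps L = (2 * eps) *: S.
  rewrite /T /gram_eps mulmxDl !mulmxDr SS -!scalemxAl -!scalemxAr !mul1mx !mulmx1.
  by apply/matrixP => i j; rewrite !mxE; ring.
by apply: psdmxZ psdS; rewrite mulr_ge0.
Qed.

End Convexity.

Lemma convex_q_eps {R : realType} (eps : R) : 0 <= eps -> convex_fun (q_eps eps).
Proof.
rewrite q_epsE le_eqVlt => /orP[/eqP<-|]; last exact: convex_trsqrt_gram_eps.
apply: convex_fun_approx => e e_gt0; exists (fun L => trsqrt (gram_eps (e / 2) L)).
  by apply: convex_trsqrt_gram_eps; rewrite divr_gt0.
move=> L; rewrite trsqrt_gram_eps_ge /=.
have e_half : 2 * (e / 2) = e by rewrite mulrC divfK.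
by rewrite -[X in _ + X]e_half trsqrt_gram_eps_le // divr_ge0 ?ltW.
Qed.

Section SqrtComp.
Context {R : realType} {V : normedModType R}.
Implicit Types (f : V -> R) (x v : V).

Lemma differentiable_sqrt_comp f x : differentiable f x -> 0 < f x ->
  differentiable (fun y => Num.sqrt (f y)) x.
Proof.
move=> df fx_gt0; apply: (differentiable_comp (g := Num.sqrt)) => //.
by have [] := is_derive1_sqrt fx_gt0; move/derivable1_diffP.
Qed.

Lemma derive_sqrt_comp f x v : differentiable f x -> 0 < f x ->
  'D_v (fun y => Num.sqrt (f y)) x = 'D_v f x * (2 * Num.sqrt (f x))^-1.
Proof.
move=> df fx_gt0; have [/derivable1_diffP dsqrt _] := is_derive1_sqrt fx_gt0.
rewrite deriveE; last exact: differentiable_sqrt_comp.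
rewrite (diff_comp df dsqrt) /= deriv1E; last exact/derivable1_diffP.
by rewrite derive1E derive_sqrt // -deriveE.
Qed.

End SqrtComp.

Section Elementary.
Context {R : realType} {V : normedModType R}.
Implicit Types (f g : V -> R).

Inductive elementary : (V -> R) -> Prop :=
| elementary_affine f : (forall x, differentiable f x) ->
    (forall v, exists c, forall x, 'D_v f x = c) -> elementary f
| elementaryD f g : elementary f -> elementary g -> elementary (fun x => f x + g x)
| elementaryM f g : elementary f -> elementary g -> elementary (fun x => f x * g x)
| elementary_sqrt f : elementary f -> (forall x, 0 < f x) ->
    elementary (fun x => Num.sqrt (f x))
| elementaryV f : elementary f -> (forall x, f x != 0) -> elementary (fun x => (f x)^-1).

Lemma elementary_cst (c : R) : elementary (fun _ => c).
Proof.
apply: elementary_affine => [x|v]; first exact: differentiable_cst.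
by exists 0 => x; rewrite derive_cst.
Qed.

Lemma elementary_sum (I : Type) (r : seq I) (F : I -> V -> R) :
  (forall i, elementary (F i)) -> elementary (fun x => \sum_(i <- r) F i x).
Proof.
move=> elF; elim: r => [|i r IHr].
  by under eq_fun do rewrite big_nil; exact: elementary_cst.
by under eq_fun do rewrite big_cons; exact: elementaryD.
Qed.

Lemma elementary_differentiable f : elementary f -> forall x, differentiable f x.
Proof.
elim=> {f} [f df _ | f g _ df _ dg | f g _ df _ dg | f _ df f_gt0 | f _ df f_neq0] x.
- exact: df.
- exact: differentiableD.
- exact: differentiableM.
- exact: differentiable_sqrt_comp.
- exact: differentiableV.
Qed.

Lemma elementary_derive f v : elementary f -> elementary (fun x => 'D_v f x).
Proof.
have dv g x : elementary g -> derivable g x v.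
  by move=> elg; exact/diff_derivable/elementary_differentiable.
elim=> {f} [f _ Df | f g elf elDf elg elDg | f g elf elDf elg elDg
           | f elf elDf f_gt0 | f elf elDf f_neq0].
- by have [c Dfc] := Df v; under eq_fun do rewrite Dfc; exact: elementary_cst.
- rewrite (_ : 'D_v _ = fun x => 'D_v f x + 'D_v g x); first exact: elementaryD.
  by apply/funext => x; apply: deriveD; exact: dv.
- rewrite (_ : 'D_v _ = fun x => f x * 'D_v g x + g x * 'D_v f x).
    by apply: elementaryD; exact: elementaryM.
  by apply/funext => x; apply: deriveM; exact: dv.
- rewrite (_ : 'D_v _ = fun x => 'D_v f x * (2 * Num.sqrt (f x))^-1).
    apply: elementaryM elDf (elementaryV _ _).
      exact: elementaryM (elementary_cst _) (elementary_sqrt elf f_gt0).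
    by move=> x; rewrite mulf_neq0 // gt_eqF // sqrtr_gt0.
  apply/funext => x; apply: derive_sqrt_comp => //.
  exact: elementary_differentiable.
- rewrite (_ : 'D_v _ = fun x => -1 * (f x * f x)^-1 * 'D_v f x).
    apply: elementaryM (elementaryM (elementary_cst _) _) elDf.
    by apply: elementaryV (elementaryM elf elf) _ => x; rewrite mulf_neq0.
  by apply/funext => x; rewrite mulN1r -expr2; apply: deriveV => //; exact: dv.
Qed.

End Elementary.

Lemma elementary_smooth {R : realType} m n (f : 'M[R]_(m, n) -> R) :
  elementary f -> smooth f.
Proof.
move=> elf vs; have elD : elementary (iter_dderiv vs f).
  by elim: vs => [|v vs IH] //=; exact: elementary_derive.
split=> [x|v x]; have := elementary_differentiable elD x.
  exact: differentiable_continuous.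
exact: diff_derivable.
Qed.

Lemma elementary_mx_coord {R : realType} m n i j :
  elementary (fun M : 'M[R]_(m, n) => M i j).
Proof.
apply: elementary_affine => [M|v]; first exact: differentiable_coord.
by exists (v i j) => M; rewrite -[in RHS](derive_id M v) derive_mx ?mxE.
Qed.

Lemma elementary_trsqrt {R : realType} {V : normedModType R} (G : V -> 'M[R]_2) :
  (forall i j, elementary (fun x => G x i j)) ->
  (forall x, psdmx (G x)) -> (forall x, 0 < \det (G x)) ->
  elementary (fun x => trsqrt (G x)).
Proof.
move=> elG psdG detG; have el_det : elementary (fun x => \det (G x)).
  under eq_fun do rewrite det2E -mulN1r.
  by apply: elementaryD (elementaryM (elementary_cst _) _); exact: elementaryM.
apply: elementary_sqrt => [|x]; last by rewrite -sqrtr_gt0 trsqrt_gt0.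
apply: elementaryD (elementaryM (elementary_cst _) (elementary_sqrt el_det detG)).
by under eq_fun do rewrite mxtrace2E; exact: elementaryD.
Qed.

Lemma elementary_gram_eps {R : realType} m n (eps : R) i j :
  elementary (fun L : 'M[R]_(m, n) => gram_eps eps L i j).
Proof.
under eq_fun do rewrite !mxE.
apply: elementaryD (elementary_cst _) (elementary_sum _ _) => k.
by under eq_fun do rewrite mxE; apply: elementaryM; exact: elementary_mx_coord.
Qed.

Lemma smooth_q_eps {R : realType} (eps : R) : 0 < eps -> smooth (q_eps eps).
Proof.
move=> eps_gt0; rewrite q_epsE.
apply/elementary_smooth/elementary_trsqrt => [i j|L|L].
- exact: elementary_gram_eps.
- exact: psdmx_gram_eps.
- by apply: det_gram_eps_gt0; left.
Qed.

Section DeriveTrsqrt.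
Context {R : realType}.


(* The mixed term of [det2_add] is bilinear, so it is the derivative of the determinant. *)
Lemma is_derive_det2 (G : R -> 'M[R]_2) (G' : 'M[R]_2) (t : R) :
  (forall i j, is_derive t (1 : R) (fun s => G s i j) (G' i j)) ->
  is_derive t (1 : R) (fun s => \det (G s)) (\det (G t + G') - \det (G t) - \det G').
Proof.
move=> dG; have d00 := dG 0 0; have d01 := dG 0 1; have d10 := dG 1 0; have d11 := dG 1 1.
under eq_fun do rewrite det2E.
by apply: trigger_derive; rewrite det2_add /GRing.scale /=; ring.
Qed.

Lemma is_derive_trsqrt (G : R -> 'M[R]_2) (G' : 'M[R]_2) (t : R) :
  (forall i j, is_derive t (1 : R) (fun s => G s i j) (G' i j)) ->
  psdmx (G t) -> 0 < \det (G t) ->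
  is_derive t (1 : R) (fun s => trsqrt (G s))
    ((\tr G' + (\det (G t + G') - \det (G t) - \det G') / Num.sqrt (\det (G t)))
       / (2 * trsqrt (G t))).
Proof.
move=> dG psdGt detGt; have d00 := dG 0 0; have d11 := dG 1 1.
have dsqrt : is_derive t (1 : R) (fun s => Num.sqrt (\det (G s)))
    ((2 * Num.sqrt (\det (G t)))^-1 * (\det (G t + G') - \det (G t) - \det G')).
  exact: is_derive1_comp (is_derive1_sqrt detGt) (is_derive_det2 dG).
have dtr : is_derive t (1 : R) (fun s => \tr (G s) + 2 * Num.sqrt (\det (G s)))
    (\tr G' + 2 * ((2 * Num.sqrt (\det (G t)))^-1
                   * (\det (G t + G') - \det (G t) - \det G'))).
  under eq_fun do rewrite mxtrace2E.
  by apply: trigger_derive; rewrite mxtrace2E /GRing.scale /=; ring.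
have tr_gt0 : 0 < \tr (G t) + 2 * Num.sqrt (\det (G t)).
  by rewrite -sqrtr_gt0; exact: trsqrt_gt0.
rewrite /trsqrt; apply: trigger_derive.
  exact: (@is_derive1_comp _ Num.sqrt (fun s => \tr (G s) + 2 * Num.sqrt (\det (G s))) t _ _
    (is_derive1_sqrt tr_gt0) dtr).
by field; rewrite !gt_eqF ?sqrtr_gt0.
Qed.

End DeriveTrsqrt.

Section ScaleDerivative.
Context {R : realType} {m : nat}.
Implicit Types (eps : R) (L : 'M[R]_(m, 2)) (A : 'M[R]_m).

Lemma gram_eps_scale eps L A t : A^T = A ->
  gram_eps eps ((1%:M + t *: A) *m L) =
    gram_eps eps L + (2 * t) *: (L^T *m A *m L) + t ^+ 2 *: (L^T *m (A *m A) *m L).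
Proof.
move=> A_sym; rewrite /gram_eps mulmxDl mul1mx -scalemxAl.
rewrite [(_ + _)^T]linearD /= [(_ *: _)^T]linearZ /=.
rewrite trmx_mul A_sym mulmxDl !mulmxDr -!scalemxAl -!scalemxAr !mulmxA scalerA -expr2.
by rewrite mulr_natl mulr2n scalerDl !addrA.
Qed.

Lemma derive_q_eps_scale eps L A : psdmx A -> 0 < \det (gram_eps eps L) ->
  let g t := trsqrt (gram_eps eps ((1%:M + t *: A) *m L)) in
  derivable g 0 1 /\ \tr (L^T *m A *m L) / trsqrt (gram_eps eps L) <= derive1 g 0.
Proof.
move=> psdA detG g; set G := gram_eps eps L; set K := L^T *m A *m L.
have [A_sym _] := psdA.
have psdG : psdmx G := psdmx_gram_eps eps L.
have psd2K : psdmx (2 *: K) by exact/psdmxZ/psdmx_conj.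
have G0 : gram_eps eps ((1%:M + 0 *: A) *m L) = G by rewrite scale0r addr0 mul1mx.
have dG i j : is_derive (0 : R) (1 : R)
    (fun t => gram_eps eps ((1%:M + t *: A) *m L) i j) ((2 *: K) i j).
  under eq_fun do rewrite gram_eps_scale // !mxE.
  by apply: trigger_derive; rewrite /GRing.scale /= !mxE; ring.
have := is_derive_trsqrt dG; rewrite G0 => /(_ psdG detG) dg.
split; first exact: ex_derive.
rewrite derive1E derive_val mxtraceZ.
have H_neq0 : trsqrt G != 0 by rewrite gt_eqF // trsqrt_gt0.
have -> : \tr K / trsqrt G = (2 * \tr K) / (2 * trsqrt G) by field.
rewrite ler_wpM2r ?invr_ge0 ?mulr_ge0 ?trsqrt_ge0 // lerDl divr_ge0 ?sqrtr_ge0 //.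
by have := det2_psd_superadd psdG psd2K; lra.
Qed.

End ScaleDerivative.

Theorem lemmaA4 (R : realType) :
  (* (a) *)
  (forall (eps : R), 0 <= eps -> forall L : 'M[R]_(3, 2),
     q_eps eps L =
     Num.sqrt (\tr (eps ^+ 2 *: 1%:M + L^T *m L)
               + 2 * Num.sqrt (\det (eps ^+ 2 *: 1%:M + L^T *m L)))) /\
  (forall (eps : R), 0 < eps -> smooth (q_eps eps)) /\
  (* (b) *)
  (forall (eps : R), 0 <= eps -> convex_fun (q_eps eps)) /\
  (* (c) *)
  (forall (eps : R) (L : 'M[R]_(3, 2)) (A : 'M[R]_3),
     0 <= eps -> psdmx A -> (eps = 0 -> \rank L = 2%N) ->
     let g := fun t : R => q_eps eps ((1%:M + t *: A) *m L) in
     derivable g 0 1 /\ 0 <= derive1 g 0 /\ (A *m L != 0 -> 0 < derive1 g 0)).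
Proof.
split; first by move=> eps _ L; rewrite q_epsE.
split; first exact: smooth_q_eps.
split; first exact: convex_q_eps.
move=> eps L A eps_ge0 psdA rkL g.
have detG : 0 < \det (gram_eps eps L).
  apply: det_gram_eps_gt0; have [eps0|eps_neq0] := eqVneq eps 0; first by right; exact: rkL.
  by left; rewrite lt_def eps_neq0.
rewrite /g q_epsE.
have [dg lb] := derive_q_eps_scale psdA detG.
have trsqrtG := trsqrt_gt0 (psdmx_gram_eps eps L) detG.
split=> //; split=> [|ALn0].
  by apply/le_trans/lb/divr_ge0/ltW/trsqrtG/psdmx2_tr_ge0/psdmx_conj.
by apply/lt_le_trans/lb/divr_gt0/trsqrtG/mxtrace_conj_gt0.
Qed.
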